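(* Every finite simple undirected graph is isomorphic to an induced subgraph of a finite simple undirected graph whose automorphism group acts primitively on its vertex set.
   Context: A permutation group is primitive if it is transitive and preserves no equivalence relation other than equality and the universal relation. *)

From mathcomp Require Import all_boot all_fingroup.
From mathcomp Require Import primitive_action.
Set Implicit Arguments. Unset Strict Implicit. Unset Printing Implicit Defensive.

Definition simple_graph (V : finType) (e : rel V) : Prop :=
  symmetric e /\ irreflexive e.

Definition graph_aut (W : finType) (h : rel W) : {set {perm W}} :=
  [set s : {perm W} | [forall x, forall y, h (s x) (s y) == h x y]].

Definition induced_embedding (V W : finType) (e : rel V) (h : rel W)
  (f : V -> W) : Prop :=
  injective f /\ forall x y, e x y = h (f x) (f y).

(* Take a prime p > 2^(|V|+1), code the vertices of V as distinct powers of two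
   in Z/p, and join two residues when their difference is the difference of the
   codes of an edge.  Since a sum of two powers of two determines the two
   exponents, and the sums involved stay below p, a difference of codes
   determines the ordered pair of vertices, so the coding is an induced
   embedding.  The translations of Z/p are automorphisms of this Cayley graph,
   so its automorphism group is transitive of prime degree, hence primitive. *)

From mathcomp Require Import all_boot all_fingroup all_algebra zify.
From mathcomp Require Import gseries primitive_action.
Import GRing.Theory.

Set Implicit Arguments. Unset Strict Implicit. Unset Printing Implicit Defensive.

Lemma expn2_addn_max a b c d :
  a <= b -> c <= d -> 2 ^ a + 2 ^ b = 2 ^ c + 2 ^ d -> b = d.
Proof.
wlog le_bd : a b c d / b <= d => [sym le_ab le_cd E|le_ab le_cd E].
  case: (leqP b d) => [|/ltnW] le; first exact: (sym a b c d).
  by apply/esym/(sym c d a b).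
have [lt_bd|] := ltnP b d; last by lia.
have : 2 ^ a <= 2 ^ b by rewrite leq_exp2l.
have : 2 ^ b.+1 <= 2 ^ d by rewrite leq_exp2l.
have := expn_gt0 2 c; rewrite expnS; lia.
Qed.

Lemma expn2_addn_inj a b c d : 2 ^ a + 2 ^ b = 2 ^ c + 2 ^ d ->
  (a = c /\ b = d) \/ (a = d /\ b = c).
Proof.
wlog le_ab : a b / a <= b => [sym|].
  case: (leqP a b) => [/sym//|/ltnW/sym]; rewrite addnC; tauto.
wlog le_cd : c d / c <= d => [sym|].
  case: (leqP c d) => [/sym//|/ltnW/sym]; rewrite [2 ^ c + _]addnC; tauto.
move=> E; have db := expn2_addn_max le_ab le_cd E; subst d.
by left; split=> //; apply/(expnI (ltnSn 1))/(addIn E).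
Qed.

Lemma prime_trans_prim (aT : finGroupType) (sT : finType) (G : {group aT})
    (to : {action aT &-> sT}) :
  prime #|sT| -> [transitive G, on [set: sT] | to] ->
  [primitive G, on [set: sT] | to].
Proof.
move=> p_pr trG; have [x _ _] := imsetP trG.
rewrite (trans_prim_astab (in_setT x) trG); apply/maximal_eqP.
split=> [|H sCH sHG]; first exact: subsetIl.
have idxC : #|G : 'C_G[x | to]|%g = #|sT|.
  by rewrite -card_orbit (atransP trG x) ?cardsT.
have idx_prod := Lagrange_index sHG sCH; rewrite idxC in idx_prod.
have : (#|G : H| %| #|sT|)%g by rewrite -idx_prod dvdn_mulr.
case/primeP: (p_pr) => _ /[apply] /orP[/eqP/(index1g sHG) -> | /eqP idxH].
  by right.
left; apply/esym/(index1g sCH)/eqP.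
by rewrite -(eqn_pmul2l (prime_gt0 p_pr)) -{1}idxH idx_prod muln1.
Qed.

Lemma graph_aut_group_set (W : finType) (h : rel W) : group_set (graph_aut h).
Proof.
apply/group_setP; split.
  by rewrite inE; apply/forallP => x; apply/forallP => y; rewrite !perm1.
move=> s t; rewrite !inE => /forallP s_aut /forallP t_aut.
apply/forallP => x; apply/forallP => y; rewrite !permM.
move/forallP: (t_aut (s x)) => /(_ (s y)) /eqP ->.
exact: (forallP (s_aut x)).
Qed.

Canonical graph_aut_group (W : finType) (h : rel W) :=
  Group (graph_aut_group_set h).

Local Open Scope ring_scope.

Section CayleyGraph.

Variables (Z : finZmodType) (S : pred Z).

Definition cayley_graph : rel Z := fun x y => (x != y) && S (x - y).

Lemma cayley_graph_simple :
  (forall d, S (- d) = S d) -> simple_graph cayley_graph.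
Proof.
move=> S_opp; split=> [x y|x]; last by rewrite /cayley_graph eqxx.
by rewrite /cayley_graph eq_sym -S_opp opprB.
Qed.

Definition translation (k : Z) : {perm Z} := perm (addrI k).

Lemma translationE k x : translation k x = k + x.
Proof. exact: permE. Qed.

Lemma translation_aut k : translation k \in graph_aut cayley_graph.
Proof.
rewrite inE; apply/forallP => x; apply/forallP => y; rewrite !translationE.
by rewrite /cayley_graph (inj_eq (addrI k)) opprD addrACA subrr add0r.
Qed.

Lemma cayley_graph_transitive :
  [transitive graph_aut cayley_graph, on [set: Z] | 'P].
Proof.
apply/imsetP; exists 0 => //; apply/setP => y; rewrite inE; apply/esym/orbitP.
exists (translation y); first exact: translation_aut.
by rewrite -[LHS]/(translation y 0) translationE addr0.
Qed.

End CayleyGraph.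

Section DifferenceEmbedding.

Variables (V : finType) (Z : finZmodType) (e : rel V) (f : V -> Z).

Definition distinct_differences :=
  forall x y u v, f x - f y = f u - f v -> x = y \/ (x = u /\ y = v).

Definition edge_differences : pred Z :=
  [pred d | [exists u, exists v, e u v && (d == f u - f v)]].

Lemma edge_differences_opp : symmetric e ->
  forall d, edge_differences (- d) = edge_differences d.
Proof.
suff opp_diff d : symmetric e -> edge_differences d -> edge_differences (- d).
  by move=> e_sym d; apply/idP/idP => /opp_diff; rewrite ?opprK; apply.
move=> e_sym /existsP[u /existsP[v /andP[e_uv /eqP->]]].
by apply/existsP; exists v; apply/existsP; exists u; rewrite e_sym e_uv opprB /=.
Qed.

Lemma distinct_differences_inj : distinct_differences -> injective f.
Proof.
move=> f_dd x y fxy; have /f_dd[//|[_ ->//]] : f x - f y = f x - f x.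
by rewrite fxy.
Qed.

Lemma cayley_graph_induced : irreflexive e -> distinct_differences ->
  induced_embedding e (cayley_graph edge_differences) f.
Proof.
move=> e_irr f_dd; have f_inj := distinct_differences_inj f_dd.
split=> // x y; rewrite /cayley_graph (inj_eq f_inj); apply/idP/andP.
  move=> e_xy; split; first by apply: contraTneq e_xy => ->; rewrite e_irr.
  by apply/existsP; exists x; apply/existsP; exists y; rewrite e_xy eqxx.
case=> /eqP x_ne_y /existsP[u /existsP[v /andP[e_uv /eqP/f_dd]]].
by case=> [//|[-> ->]].
Qed.

End DifferenceEmbedding.

Section PowerOfTwoCode.

Variables (V : finType) (m : nat).
Hypothesis big_m : (2 ^ #|V|.+1 < m.+1)%N.

(* Z/p is taken as 'I_m.+1 with p = m.+1: only ordinals of a successor carry a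
   ring structure. *)
Definition pow2_code (v : V) : 'I_m.+1 := inord (2 ^ enum_rank v)%N.

Lemma expn2_enum_rank_lt (v : V) : (2 ^ enum_rank v < 2 ^ #|V|)%N.
Proof. by rewrite ltn_exp2l. Qed.

Lemma pow2_code_val (v : V) : pow2_code v = (2 ^ enum_rank v)%N :> nat.
Proof.
by rewrite inordK //; have := expn2_enum_rank_lt v; have := big_m; rewrite expnS; lia.
Qed.

Lemma pow2_code_addn_val (u v : V) :
  pow2_code u + pow2_code v = (2 ^ enum_rank u + 2 ^ enum_rank v)%N :> nat.
Proof.
rewrite /= !pow2_code_val modn_small //.
have := expn2_enum_rank_lt u; have := expn2_enum_rank_lt v.
by have := big_m; rewrite expnS; lia.
Qed.

Lemma pow2_code_distinct_differences : distinct_differences pow2_code.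
Proof.
move=> x y u v E.
have sums : pow2_code x + pow2_code v = pow2_code u + pow2_code y.
  by rewrite -(subrK (pow2_code y) (pow2_code x)) E addrAC subrK.
move/(congr1 (@nat_of_ord _)): sums.
rewrite !pow2_code_addn_val => /expn2_addn_inj.
have rank_inj (w w' : V) : enum_rank w = enum_rank w' :> nat -> w = w'.
  by move/ord_inj/enum_rank_inj.
by case=> [[/rank_inj-> /rank_inj->]|[/rank_inj-> _]]; [right|left].
Qed.

End PowerOfTwoCode.

Theorem proposition9 (V : finType) (e : rel V) :
  simple_graph e ->
  exists (W : finType) (h : rel W),
    [/\ simple_graph h,
        [primitive graph_aut h, on [set: W] | 'P]
      & exists f : V -> W, induced_embedding e h f].
Proof.
move=> [e_sym e_irr]; have [[|m] //= big_m m_pr] := prime_above (2 ^ #|V|.+1).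
pose h := cayley_graph (edge_differences e (pow2_code m)).
exists 'I_m.+1, h; split.
- exact/cayley_graph_simple/edge_differences_opp.
- apply: prime_trans_prim; first by rewrite card_ord.
  exact: cayley_graph_transitive.
- exists (pow2_code m); apply: cayley_graph_induced => //.
  exact: pow2_code_distinct_differences.
Qed.
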